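(* Let $M$ be a nonzero real symmetric matrix and let $\xi$ be a principal eigenvector of $M$. Then for any $\eta\ne0$ with $M\eta\neq 0$, $$\angle(\eta,M\eta)\le3\,\angle(\eta,\xi).$$
   Context: For nonzero $\xi,\eta\in\mathbb{R}^p$, $\angle(\xi,\eta)=\cos^{-1}\bigl(|\xi^T\eta|/(\|\xi\|_2\|\eta\|_2)\bigr)\in[0,\pi/2]$. A principal eigenvector of a symmetric matrix $M$ is an eigenvector associated with an eigenvalue of largest absolute value, so that $\|M\xi\|_2=\|M\|_2\|\xi\|_2$ where $\|M\|_2$ is the spectral (operator 2-) norm. *)

From HB Require Import structures.
From mathcomp Require Import all_boot all_order all_algebra.
From mathcomp Require Import reals trigo.
Set Implicit Arguments. Unset Strict Implicit. Unset Printing Implicit Defensive.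
Import Order.TTheory GRing.Theory Num.Theory.
Local Open Scope ring_scope.

Definition dotv (R : realType) (p : nat) (x y : 'cV[R]_p) : R :=
  \sum_(i < p) x i 0 * y i 0.

Definition norm2 (R : realType) (p : nat) (x : 'cV[R]_p) : R :=
  Num.sqrt (dotv x x).

Definition vangle (R : realType) (p : nat) (x y : 'cV[R]_p) : R :=
  acos (`|dotv x y| / (norm2 x * norm2 y)).

Definition is_eigenvalue (R : realType) (p : nat) (M : 'M[R]_p) (mu : R) : Prop :=
  exists v : 'cV[R]_p, v != 0 /\ M *m v = mu *: v.

Definition principal_eigenvector (R : realType) (p : nat) (M : 'M[R]_p)
  (xi : 'cV[R]_p) : Prop :=
  xi != 0 /\ exists lambda : R, M *m xi = lambda *: xi /\
    forall mu : R, is_eigenvalue M mu -> `|mu| <= `|lambda|.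

(* Let [lambda] be the eigenvalue of [xi], [X = |xi|^2] and [s = eta . xi].
   Every eigenvalue of the complexification of [M] is real, hence bounded by
   [|lambda|], so the spectral theorem gives [|M v| <= |lambda| |v|] and
   [|v . M v| <= |lambda| |v|^2] for all [v].  Applying the latter to
   [w = X eta - s xi], which is orthogonal to [xi], yields
   [X |eta . M eta| >= |lambda| (2 s^2 - X |eta|^2)]; dividing by
   [|eta| |M eta| <= |lambda| |eta|^2] gives
   [cos angle(eta, M eta) >= 2 cos^2 angle(eta, xi) - 1 = cos (2 angle(eta, xi))].
   So the angle at [M eta] is in fact at most twice the angle at [xi]. *)

From HB Require Import structures.
From mathcomp Require Import all_boot all_order all_algebra.
From mathcomp Require Import reals trigo.
From mathcomp Require Import complex spectral sesquilinear.
From mathcomp Require Import ring lra.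
Set Implicit Arguments.
Unset Strict Implicit.
Unset Printing Implicit Defensive.
Import Order.TTheory GRing.Theory Num.Theory.
Local Open Scope ring_scope.

Section DotProduct.
Variables (R : realType) (p : nat).
Implicit Types (x y z : 'cV[R]_p) (a : R).

Lemma dotvE x y : dotv x y = (x^T *m y) 0 0.
Proof. by rewrite /dotv mxE; apply: eq_bigr => i _; rewrite mxE. Qed.

Lemma dotvC x y : dotv x y = dotv y x.
Proof. by apply: eq_bigr => i _; rewrite mulrC. Qed.

Lemma dotvBl x y z : dotv (x - y) z = dotv x z - dotv y z.
Proof. by rewrite /dotv -sumrB; apply: eq_bigr => i _; rewrite !mxE mulrBl. Qed.

Lemma dotvZl a x y : dotv (a *: x) y = a * dotv x y.
Proof. by rewrite /dotv mulr_sumr; apply: eq_bigr => i _; rewrite mxE mulrA. Qed.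

Lemma dotvBr x y z : dotv x (y - z) = dotv x y - dotv x z.
Proof. by rewrite dotvC dotvBl !(dotvC x). Qed.

Lemma dotvZr a x y : dotv x (a *: y) = a * dotv x y.
Proof. by rewrite dotvC dotvZl dotvC. Qed.

Lemma dotv_mulmx (A : 'M[R]_p) x y : dotv x (A *m y) = dotv (A^T *m x) y.
Proof. by rewrite !dotvE trmx_mul trmxK mulmxA. Qed.

Lemma dotv_ge0 x : 0 <= dotv x x.
Proof. by apply: sumr_ge0 => i _; rewrite -expr2 sqr_ge0. Qed.

Lemma dotv_eq0 x : (dotv x x == 0) = (x == 0).
Proof.
apply/idP/eqP => [|->]; last by rewrite dotvE mulmx0 mxE.
rewrite psumr_eq0 => [/allP x0|i _]; last by rewrite -expr2 sqr_ge0.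
apply/matrixP => i j; rewrite ord1 mxE.
by have /implyP/(_ isT) := x0 i (mem_index_enum i); rewrite mulf_eq0 orbb => /eqP.
Qed.

Lemma dotv_gt0 x : x != 0 -> 0 < dotv x x.
Proof. by move=> x0; rewrite lt_def dotv_eq0 x0 dotv_ge0. Qed.

Lemma sqr_norm2 x : norm2 x ^+ 2 = dotv x x.
Proof. by rewrite sqr_sqrtr // dotv_ge0. Qed.

Lemma norm2_ge0 x : 0 <= norm2 x.
Proof. exact: sqrtr_ge0. Qed.

Lemma norm2_gt0 x : x != 0 -> 0 < norm2 x.
Proof. by move=> x0; rewrite sqrtr_gt0 dotv_gt0. Qed.

Lemma dotv_sqr_le x y : dotv x y ^+ 2 <= dotv x x * dotv y y.
Proof.
have [->|y0] := eqVneq y 0; first by rewrite !dotvE !mulmx0 mxE expr0n mulr0.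
have := dotv_ge0 (dotv y y *: x - dotv x y *: y).
rewrite !(dotvBl, dotvBr, dotvZl, dotvZr) (dotvC y x) => ge0.
have : 0 <= dotv y y * (dotv x x * dotv y y - dotv x y ^+ 2).
  by move: ge0; congr (_ <= _); ring.
by rewrite pmulr_rge0 ?dotv_gt0 // subr_ge0.
Qed.

Lemma normr_dotv_le x y : `|dotv x y| <= norm2 x * norm2 y.
Proof.
rewrite -sqrtrM ?dotv_ge0 // -sqrtr_sqr ler_sqrt ?dotv_sqr_le //.
by rewrite mulr_ge0 ?dotv_ge0.
Qed.

Definition vcos x y := `|dotv x y| / (norm2 x * norm2 y).

Lemma vangleE x y : vangle x y = acos (vcos x y).
Proof. by []. Qed.

Lemma vcos_itv x y : x != 0 -> y != 0 -> 0 <= vcos x y <= 1.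
Proof.
move=> x0 y0; have xy_gt0 : 0 < norm2 x * norm2 y by rewrite mulr_gt0 ?norm2_gt0.
by rewrite /vcos divr_ge0 ?normr_ge0 ?(ltW xy_gt0) //= ler_pdivrMr // mul1r normr_dotv_le.
Qed.

End DotProduct.

Section Trigonometry.
Variable R : realType.

Lemma acos_le_of_cos_le (c x : R) : -1 <= c <= 1 -> 0 <= x <= pi ->
  cos x <= c -> acos c <= x.
Proof.
move=> c_itv x_itv; apply: contraTT; rewrite -!ltNge => x_lt_acos.
have acosc_itv : acos c \in `[0, pi] by rewrite in_itv /= acos_ge0 ?acos_lepi.
by rewrite -[X in X < _]acosK ?ltr_cos // in_itv.
Qed.

Lemma acos_le_double (c d : R) : -1 <= c <= 1 -> 0 <= d <= 1 ->
  2 * d ^+ 2 - 1 <= c -> acos c <= 2 * acos d.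
Proof.
move=> c_itv /andP[d_ge0 d_le1] le_c.
have d_itv : -1 <= d <= 1 by rewrite d_le1 andbT (le_trans _ d_ge0) ?lerN10.
have cos_acos_d : cos (acos d) = d by apply: acosK.
have acos_d_le : acos d <= pi / 2.
  apply: acos_le_of_cos_le => //; last by rewrite cos_pihalf.
  by rewrite divr_ge0 ?pi_ge0 //= ler_pdivrMr // ler_peMr ?pi_ge0 ?ler1n.
apply: acos_le_of_cos_le => //.
  by rewrite mulr_ge0 ?acos_ge0 //= -ler_pdivlMl // mulrC.
by rewrite mulr_natl cos_mulr2n cos_acos_d -mulr_natl.
Qed.

End Trigonometry.

Section Complexification.
Variable R : realType.
Local Notation toC := (real_complex R).

Lemma conj_real_complex (x : R) : (toC x)^* = toC x.
Proof. by apply: conj_Creal; have := complex_real x 0; rewrite eqxx. Qed.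

Lemma normr_real_complex (x : R) : `|toC x| = toC `|x|.
Proof. by rewrite normc_def /= expr0n /= addr0 sqrtr_sqr. Qed.

Lemma map_Re_mulmx m n k (A : 'M[R]_(m, n)) (u : 'M[R[i]]_(n, k)) :
  map_mx (@complex.Re R) (map_mx toC A *m u) = A *m map_mx (@complex.Re R) u.
Proof.
apply/matrixP => i j; rewrite !mxE raddf_sum; apply: eq_bigr => l _.
by rewrite !mxE; case: (u l j) => a b /=; rewrite mul0r subr0.
Qed.

Lemma map_Im_mulmx m n k (A : 'M[R]_(m, n)) (u : 'M[R[i]]_(n, k)) :
  map_mx (@complex.Im R) (map_mx toC A *m u) = A *m map_mx (@complex.Im R) u.
Proof.
apply/matrixP => i j; rewrite !mxE raddf_sum; apply: eq_bigr => l _.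
by rewrite !mxE; case: (u l j) => a b /=; rewrite mul0r addr0.
Qed.

(* The real or the imaginary part of a complex eigenvector is a real one. *)
Lemma is_eigenvalue_complexification p (M : 'M[R]_p) (r : R) (u : 'cV[R[i]]_p) :
  u != 0 -> map_mx toC M *m u = toC r *: u -> is_eigenvalue M r.
Proof.
move=> u0 Mu; have {}Mu : map_mx toC M *m u = map_mx toC r%:M *m u.
  by rewrite Mu map_scalar_mx mul_scalar_mx.
have [Re_u0|] := eqVneq (map_mx (@complex.Re R) u) 0; last first.
  by exists (map_mx (@complex.Re R) u); rewrite -mul_scalar_mx -!map_Re_mulmx Mu.
have [Im_u0|] := eqVneq (map_mx (@complex.Im R) u) 0; last first.
  by exists (map_mx (@complex.Im R) u); rewrite -mul_scalar_mx -!map_Im_mulmx Mu.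
case/eqP: u0; apply/matrixP => i j.
move/matrixP: Re_u0 => /(_ i j); move/matrixP: Im_u0 => /(_ i j).
by rewrite !mxE; case: (u i j) => a b /= -> ->.
Qed.

Local Open Scope sesquilinear_scope.

Definition sqnormc n (w : 'cV[R[i]]_n) := (w^t* *m w) 0 0.

Lemma sqnormcE n (w : 'cV[R[i]]_n) : sqnormc w = \sum_(k < n) `|w k 0| ^+ 2.
Proof. by rewrite /sqnormc mxE; apply: eq_bigr => k _; rewrite !mxE normCKC. Qed.

Lemma sqnormc_unitary n (P : 'M[R[i]]_n) (w : 'cV_n) :
  P \is unitarymx -> sqnormc (P^t* *m w) = sqnormc w.
Proof. by move=> P_unitary; rewrite /sqnormc trmx_mul map_mxM trmxCK mulmxA mulmxtVK. Qed.

Lemma map_real_complex_trC m n (A : 'M[R]_(m, n)) : (map_mx toC A)^t* = map_mx toC A^T.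
Proof. by apply/matrixP => i j; rewrite !mxE conj_real_complex. Qed.

Lemma sqnormc_real_complex n (v : 'cV[R]_n) : sqnormc (map_mx toC v) = toC (dotv v v).
Proof. by rewrite /sqnormc map_real_complex_trC -map_mxM mxE dotvE. Qed.

End Complexification.

Section DominatedSymmetric.
Variables (R : realType) (p : nat) (M : 'M[R]_p) (lambda : R).
Hypothesis M_sym : M^T = M.
Hypothesis lambda_max : forall mu, is_eigenvalue M mu -> `|mu| <= `|lambda|.

Local Notation toC := (real_complex R).
Local Notation A := (map_mx toC M).
Local Open Scope sesquilinear_scope.

Lemma complexification_hermitian : A \is hermsymmx.
Proof. by apply/is_hermitianmxP; rewrite expr0 scale1r map_real_complex_trC M_sym. Qed.

Lemma complexification_spectral :
  A = (spectralmx A)^t* *m diag_mx (spectral_diag A) *m spectralmx A.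
Proof.
rewrite -invmx_unitary ?spectral_unitarymx //.
exact/orthomx_spectralP/hermitian_normalmx/complexification_hermitian.
Qed.

Lemma spectral_diag_le i : `|spectral_diag A 0 i| <= toC `|lambda|.
Proof.
set P := spectralmx A; set d := spectral_diag A.
have /RRe_real d_real : d 0 i \is Num.real.
  by move/mxOverP: (hermitian_spectral_diag_real complexification_hermitian); apply.
rewrite -d_real normr_real_complex lecR; apply: lambda_max.
apply: (@is_eigenvalue_complexification _ _ M _ (row i P)^T).
  rewrite trmx_eq0; apply: contraTneq (spectral_unitarymx A) => row0.
  apply/row_unitarymxP => /(_ i i); rewrite row0 dotmxE mul0mx mxE eqxx.
  by move/eqP; rewrite eq_sym oner_eq0.
have PA : P *m A = diag_mx d *m P.
  by rewrite {1}complexification_spectral !mulmxA (unitarymxP (spectral_unitarymx A)) mul1mx.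
have AT : A^T = A by apply/matrixP => j k; rewrite !mxE -[in RHS]M_sym mxE.
rewrite -{1}AT -trmx_mul -row_mul PA d_real.
by apply/matrixP => j k; rewrite mul_diag_mx !mxE.
Qed.

Lemma dotv_mulmx_le v : dotv (M *m v) (M *m v) <= lambda ^+ 2 * dotv v v.
Proof.
set P := spectralmx A; set d := spectral_diag A.
have P_unitary : P \is unitarymx := spectral_unitarymx A.
rewrite -lecR rmorphM rmorphXn /= -!sqnormc_real_complex map_mxM.
set y := P *m map_mx toC v.
have vE : map_mx toC v = P^t* *m y.
  by rewrite mulmxA -invmx_unitary // mulVmx ?spectral_unit // mul1mx.
have Av : A *m map_mx toC v = P^t* *m (diag_mx d *m y).
  by rewrite {1}complexification_spectral !mulmxA.
rewrite Av {1}vE !sqnormc_unitary // !sqnormcE mulr_sumr; apply: ler_sum => k _.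
rewrite mul_diag_mx mxE normrM exprMn ler_wpM2r ?exprn_ge0 //.
have -> : toC lambda ^+ 2 = toC `|lambda| ^+ 2.
  by rewrite -!rmorphXn /= -normrX ger0_norm ?sqr_ge0.
by rewrite !expr2 ler_pM ?normr_ge0 ?spectral_diag_le.
Qed.

Lemma norm2_mulmx_le v : norm2 (M *m v) <= `|lambda| * norm2 v.
Proof.
rewrite /norm2 -(sqrtr_sqr lambda) -sqrtrM ?sqr_ge0 // ler_sqrt ?dotv_mulmx_le //.
by rewrite mulr_ge0 ?sqr_ge0 ?dotv_ge0.
Qed.

Lemma normr_dotv_mulmx_le v : `|dotv v (M *m v)| <= `|lambda| * dotv v v.
Proof.
apply: le_trans (normr_dotv_le _ _) _.
by rewrite -sqr_norm2 expr2 mulrCA ler_wpM2l ?norm2_ge0 ?norm2_mulmx_le.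
Qed.

Variable xi : 'cV[R]_p.
Hypothesis xi_neq0 : xi != 0.
Hypothesis M_xi : M *m xi = lambda *: xi.

Lemma dotv_principal_ge eta :
  `|lambda| * (2 * dotv eta xi ^+ 2 - dotv xi xi * dotv eta eta)
    <= dotv xi xi * `|dotv eta (M *m eta)|.
Proof.
have xiM_eta : dotv xi (M *m eta) = lambda * dotv eta xi.
  by rewrite dotv_mulmx M_sym M_xi dotvZl dotvC.
(* [w] is [dotv xi xi] times the component of [eta] orthogonal to [xi] *)
pose w := dotv xi xi *: eta - dotv eta xi *: xi.
have Mw_w : dotv xi xi ^+ 2 * dotv eta (M *m eta)
    = dotv w (M *m w) + lambda * dotv eta xi ^+ 2 * dotv xi xi.
  rewrite /w mulmxBr -!scalemxAr M_xi !(dotvBl, dotvBr, dotvZl, dotvZr).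
  by rewrite xiM_eta; ring.
have w_w : dotv w w = dotv xi xi ^+ 2 * dotv eta eta - dotv xi xi * dotv eta xi ^+ 2.
  by rewrite /w !(dotvBl, dotvBr, dotvZl, dotvZr) (dotvC xi eta); ring.
have := normr_dotv_mulmx_le w; rewrite w_w => le_Mw_w.
have X_gt0 : 0 < dotv xi xi := dotv_gt0 xi_neq0.
rewrite -(ler_pM2l X_gt0) [in leRHS]mulrA -expr2 -[dotv xi xi ^+ 2]ger0_norm ?sqr_ge0 // -normrM Mw_w [in leRHS]addrC.
apply: le_trans (lerB_normD _ _).
rewrite normrM [`|lambda * _|]normrM (ger0_norm (sqr_ge0 _)) (ger0_norm (ltW X_gt0)).
set L := `|lambda| in le_Mw_w *; set a := `|dotv w (M *m w)| in le_Mw_w *.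
nra.
Qed.

Lemma vcos_mulmx_ge eta : eta != 0 -> M *m eta != 0 ->
  2 * vcos eta xi ^+ 2 - 1 <= vcos eta (M *m eta).
Proof.
move=> eta_neq0 Meta_neq0.
have E_gt0 : 0 < dotv eta eta := dotv_gt0 eta_neq0.
have X_gt0 : 0 < dotv xi xi := dotv_gt0 xi_neq0.
have a_gt0 : 0 < norm2 eta := norm2_gt0 eta_neq0.
have b_gt0 : 0 < norm2 (M *m eta) := norm2_gt0 Meta_neq0.
have le_b : norm2 (M *m eta) <= `|lambda| * norm2 eta := norm2_mulmx_le eta.
have L_gt0 : 0 < `|lambda|.
  by rewrite -(pmulr_lgt0 _ a_gt0) (lt_le_trans b_gt0).
have -> : 2 * vcos eta xi ^+ 2 - 1
    = `|lambda| * (2 * dotv eta xi ^+ 2 - dotv xi xi * dotv eta eta)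
      / dotv xi xi / (`|lambda| * dotv eta eta).
  rewrite /vcos expr_div_n -normrX ger0_norm ?sqr_ge0 // exprMn !sqr_norm2.
  by field; rewrite ?gt_eqF.
rewrite !ler_pdivrMr ?mulr_gt0 // [leRHS]mulrC.
apply: le_trans (dotv_principal_ge eta) _; rewrite ler_wpM2l ?(ltW X_gt0) //.
rewrite /vcos mulrAC ler_pdivlMr ?mulr_gt0 // ler_wpM2l ?normr_ge0 //.
by rewrite -sqr_norm2 expr2 mulrA [leLHS]mulrC ler_wpM2r ?norm2_ge0.
Qed.

End DominatedSymmetric.

Theorem lemma1 (R : realType) (p : nat) (M : 'M[R]_p) (xi eta : 'cV[R]_p) :
  M^T = M -> M != 0 -> principal_eigenvector M xi ->
  eta != 0 -> M *m eta != 0 ->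
  vangle eta (M *m eta) <= 3 * vangle eta xi.
Proof.
move=> M_sym _ [xi_neq0 [lambda [M_xi lambda_max]]] eta_neq0 Meta_neq0.
have vcos_itvN1 (x y : 'cV[R]_p) : x != 0 -> y != 0 -> -1 <= vcos x y <= 1.
  move=> x_neq0 y_neq0; have /andP[c_ge0 ->] := vcos_itv x_neq0 y_neq0.
  by rewrite (le_trans _ c_ge0) ?lerN10.
rewrite !vangleE; apply: le_trans (acos_le_double (d := vcos eta xi) _ _ _) _.
- exact: vcos_itvN1.
- exact: vcos_itv.
- exact (vcos_mulmx_ge M_sym lambda_max xi_neq0 M_xi eta_neq0 Meta_neq0).
- by rewrite ler_wpM2r ?acos_ge0 ?vcos_itvN1 ?ler_nat.
Qed.
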